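(* Let $X,Y$ be countable discrete metric spaces and $d\in D(X,Y)$. Then $\mathbb K(H_X,H_Y)\subset M_d(X,Y)$. Moreover, if $\mathbb K(H_X,H_Y)=M_d(X,Y)$, then there exists $L>0$ such that for every injective map $f:X\to Y$ the set $\{x\in X: d(x,f(x))\le L\}$ is finite.
   Context: $H_X=l^2(X)$ with basis $\{\delta_x\}$; $\mathbb K(H_X,H_Y)$ is the space of compact operators $H_X\to H_Y$. $D(X,Y)$ is the set of metrics on $X\sqcup Y$ restricting to $d_X$ and $d_Y$. For $T:H_X\to H_Y$ bounded, $T_{yx}=\langle T\delta_x,\delta_y\rangle$; $T$ has propagation less than $L$ w.r.t. $d$ if $T_{yx}=0$ whenever $d(x,y)\ge L$. $M_d(X,Y)$ is the norm closure in $\mathbb B(H_X,H_Y)$ of the bounded operators of finite propagation w.r.t. $d$. *)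

From Stdlib Require Import Reals List ClassicalEpsilon.
Open Scope R_scope.

Definition C : Type := (R * R)%type.
Definition C0 : C := (0, 0).
Definition C1 : C := (1, 0).
Definition Cplus (z w : C) : C := (fst z + fst w, snd z + snd w).
Definition Cminus (z w : C) : C := (fst z - fst w, snd z - snd w).
Definition Cmult (z w : C) : C :=
  (fst z * fst w - snd z * snd w, fst z * snd w + snd z * fst w).
Definition Cnorm2 (z : C) : R := fst z * fst z + snd z * snd z.

Definition is_metric {T : Type} (d : T -> T -> R) : Prop :=
  (forall x y, 0 <= d x y) /\
  (forall x y, d x y = 0 <-> x = y) /\
  (forall x y, d x y = d y x) /\
  (forall x y z, d x z <= d x y + d y z).

Definition countable (T : Type) : Prop :=
  exists f : T -> nat, forall a b, f a = f b -> a = b.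

Definition discrete_metric {T : Type} (d : T -> T -> R) : Prop :=
  forall x, exists r, 0 < r /\ forall y, d x y < r -> y = x.

Definition in_D {X Y : Type} (dX : X -> X -> R) (dY : Y -> Y -> R)
  (d : (X + Y) -> (X + Y) -> R) : Prop :=
  is_metric d /\
  (forall a b, d (inl a) (inl b) = dX a b) /\
  (forall a b, d (inr a) (inr b) = dY a b).

Definition fsum_sq {X : Type} (u : X -> C) (l : list X) : R :=
  fold_right (fun x acc => Cnorm2 (u x) + acc) 0 l.

Definition normsq_le {X : Type} (u : X -> C) (M : R) : Prop :=
  forall l : list X, NoDup l -> fsum_sq u l <= M.

Definition in_l2 {X : Type} (u : X -> C) : Prop := exists M, normsq_le u M.

Definition delta {X : Type} (x : X) : X -> C :=
  fun x' => if excluded_middle_informative (x' = x) then C1 else C0.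

(* ---------- operators H_X -> H_Y ----------
   An operator is a map T : (X -> C) -> (Y -> C); only its values on
   l^2 vectors matter. *)
Definition Op (X Y : Type) : Type := (X -> C) -> (Y -> C).

Definition linear_op {X Y : Type} (T : Op X Y) : Prop :=
  forall (a : C) (u v : X -> C), in_l2 u -> in_l2 v ->
    forall y, T (fun x => Cplus (Cmult a (u x)) (v x)) y
              = Cplus (Cmult a (T u y)) (T v y).

Definition opnorm_le {X Y : Type} (T : Op X Y) (K : R) : Prop :=
  forall (v : X -> C) (M : R), normsq_le v M -> normsq_le (T v) (K * K * M).

Definition bounded_op {X Y : Type} (T : Op X Y) : Prop :=
  linear_op T /\ exists K, 0 <= K /\ opnorm_le T K.

Definition op_minus {X Y : Type} (T S : Op X Y) : Op X Y :=
  fun v y => Cminus (T v y) (S v y).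

Definition coef {X Y : Type} (T : Op X Y) (y : Y) (x : X) : C := T (delta x) y.

Definition compact_op {X Y : Type} (T : Op X Y) : Prop :=
  bounded_op T /\
  forall (v : nat -> X -> C) (B : R), (forall n, normsq_le (v n) B) ->
    exists phi : nat -> nat, (forall n, (phi n < phi (S n))%nat) /\
    exists w : Y -> C, in_l2 w /\
      forall eps, 0 < eps -> exists N, forall n, (N <= n)%nat ->
        normsq_le (fun y => Cminus (T (v (phi n)) y) (w y)) eps.

Definition propagation_lt {X Y : Type} (d : (X + Y) -> (X + Y) -> R)
  (T : Op X Y) (L : R) : Prop :=
  forall x y, L <= d (inl x) (inr y) -> coef T y x = C0.

Definition in_Md {X Y : Type} (d : (X + Y) -> (X + Y) -> R) (T : Op X Y) : Prop :=
  bounded_op T /\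
  forall eps, 0 < eps -> exists S : Op X Y,
    bounded_op S /\ (exists L, propagation_lt d S L) /\
    opnorm_le (op_minus T S) eps.

Definition injective {A B : Type} (f : A -> B) : Prop :=
  forall a b, f a = f b -> a = b.

(* A compact operator T is approximated in
   norm by a truncation P_G T P_F to finite sets F ⊆ X, G ⊆ Y; such a
   truncation has a finite matrix, hence finite propagation.  Two tail
   estimates make the error small:
   - compactness gives a finite G ⊆ Y outside of which T v is uniformly small
     over the unit ball ([compact_uniform_tail]);
   - boundedness makes each row x ↦ T_{yx} an l^2 vector (Cauchy–Schwarz), so
     for each y ∈ G a finite F_y ⊆ X controls |(T v)(y)| for unit vectors v
     vanishing on F_y ([bounded_row_tail]); F is the union of the F_y.
   Part 2.  If M_d(X,Y) ⊆ K(H_X,H_Y), then for every L and every injection f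
   the set {x | d(x,f x) ≤ L} is finite: otherwise the partial isometry
   δ_x ↦ δ_{f x} on that set has propagation at most L, hence is compact, yet
   it maps an infinite orthonormal family onto an orthonormal family.

   Neither part uses countability or discreteness of X and Y, nor any metric
   axiom of d; l^2, bounded and compact operators are the explicit notions of Defs. *)
From Pilot Require Import Defs.
From Stdlib Require Import Reals List Lra Psatz Classical ClassicalEpsilon
  FunctionalExtensionality.
Open Scope R_scope.

(* Stdlib's Reals also define [C], [C0], [C1]; refer to the complex ones. *)
Local Notation C := Defs.C.
Local Notation C0 := Defs.C0.
Local Notation C1 := Defs.C1.

Ltac ceq := unfold Cplus, Cmult, Cminus, C0, C1, Cnorm2 in *; simpl in *; f_equal; ring.

Lemma Cnorm2_nonneg z : 0 <= Cnorm2 z.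
Proof. destruct z as [a b]; unfold Cnorm2; simpl; nra. Qed.

Lemma Cnorm2_C0 : Cnorm2 C0 = 0.
Proof. unfold Cnorm2, C0; simpl; ring. Qed.

Lemma Cnorm2_eq0 z : Cnorm2 z = 0 -> z = C0.
Proof. destruct z as [a b]; unfold Cnorm2, C0; simpl; intros; f_equal; nra. Qed.

Lemma Cnorm2_add_le z w : Cnorm2 (Cplus z w) <= 2 * Cnorm2 z + 2 * Cnorm2 w.
Proof.
  destruct z as [a b], w as [c d]; unfold Cnorm2, Cplus; simpl.
  pose proof (pow2_ge_0 (a - c)); pose proof (pow2_ge_0 (b - d)); nra.
Qed.

Lemma Cnorm2_le_diff z w : Cnorm2 z <= 2 * Cnorm2 (Cminus z w) + 2 * Cnorm2 w.
Proof.
  destruct z as [a b], w as [c d]; unfold Cnorm2, Cminus; simpl.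
  pose proof (pow2_ge_0 (a - 2*c)); pose proof (pow2_ge_0 (b - 2*d)); nra.
Qed.

Lemma Cnorm2_sub_le z w v :
  Cnorm2 (Cminus z w) <= 2 * Cnorm2 (Cminus z v) + 2 * Cnorm2 (Cminus w v).
Proof.
  destruct z as [a b], w as [c d], v as [e f]; unfold Cnorm2, Cminus; simpl.
  pose proof (pow2_ge_0 (a + c - 2*e)); pose proof (pow2_ge_0 (b + d - 2*f)); nra.
Qed.

(** * Finite sums of squared moduli *)

Section FiniteSums.
Context {A : Type}.
Implicit Types (u v w : A -> C) (l : list A).

Lemma fsum_nonneg u l : 0 <= fsum_sq u l.
Proof. induction l; simpl; [lra|]. pose proof (Cnorm2_nonneg (u a)); lra. Qed.

Lemma fsum_app u l1 l2 : fsum_sq u (l1 ++ l2) = fsum_sq u l1 + fsum_sq u l2.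
Proof. induction l1; simpl; [lra|]. rewrite IHl1; lra. Qed.

Lemma fsum_le_combination u v w l a b :
  (forall x, In x l -> Cnorm2 (u x) <= a * Cnorm2 (v x) + b * Cnorm2 (w x)) ->
  fsum_sq u l <= a * fsum_sq v l + b * fsum_sq w l.
Proof.
  induction l as [|x l IH]; intros H; simpl; [lra|].
  pose proof (H x (or_introl eq_refl)).
  assert (fsum_sq u l <= a * fsum_sq v l + b * fsum_sq w l)
    by (apply IH; intros; apply H; right; auto).
  lra.
Qed.

Lemma fsum_mono u v l :
  (forall x, In x l -> Cnorm2 (u x) <= Cnorm2 (v x)) -> fsum_sq u l <= fsum_sq v l.
Proof.
  intros H. pose proof (fsum_le_combination u v v l 1 0) as Hc.
  rewrite !Rmult_0_l, Rplus_0_r, Rmult_1_l in Hc. apply Hc.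
  intros x Hx. rewrite Rmult_0_l, Rplus_0_r, Rmult_1_l. auto.
Qed.

Lemma fsum_ext u v l :
  (forall x, In x l -> Cnorm2 (u x) = Cnorm2 (v x)) -> fsum_sq u l = fsum_sq v l.
Proof. intros H; apply Rle_antisym; apply fsum_mono; intros x Hx; rewrite H; auto; lra. Qed.

Lemma fsum_add u v w l :
  (forall x, Cnorm2 (u x) = Cnorm2 (v x) + Cnorm2 (w x)) ->
  fsum_sq u l = fsum_sq v l + fsum_sq w l.
Proof. intros H; induction l; simpl; [lra|]. rewrite IHl, H. lra. Qed.

Lemma fsum_zero u l : (forall x, Cnorm2 (u x) = 0) -> fsum_sq u l = 0.
Proof. intros H; induction l; simpl; [lra|]. rewrite IHl, H. lra. Qed.

Lemma fsum_scale u c l : fsum_sq (fun x => Cmult (c, 0) (u x)) l = c * c * fsum_sq u l.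
Proof.
  induction l; simpl; [ring|]. rewrite IHl. destruct (u a); unfold Cnorm2, Cmult; simpl; ring.
Qed.

Lemma fsum_bound u l c :
  (forall x, In x l -> Cnorm2 (u x) <= c) -> fsum_sq u l <= INR (length l) * c.
Proof.
  induction l as [|x l IH]; intros H; [simpl; lra|].
  pose proof (H x (or_introl eq_refl)).
  assert (fsum_sq u l <= INR (length l) * c) by (apply IH; intros; apply H; right; auto).
  cbn [length fsum_sq fold_right]; rewrite S_INR. unfold fsum_sq in *. lra.
Qed.

Lemma fsum_incl u l1 : NoDup l1 -> forall l2, incl l1 l2 -> fsum_sq u l1 <= fsum_sq u l2.
Proof.
  induction 1 as [|a l1 Ha Hnd IH]; intros l2 Hi.
  - simpl; apply fsum_nonneg.
  - destruct (in_split _ _ (Hi a (or_introl eq_refl))) as [p [q ->]].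
    assert (Hsub : fsum_sq u l1 <= fsum_sq u (p ++ q)).
    { apply IH. intros x Hx.
      assert (Hx2 : In x (p ++ a :: q)) by (apply Hi; right; auto).
      apply in_app_or in Hx2. apply in_or_app.
      destruct Hx2 as [H|[H|H]]; auto. subst; contradiction. }
    rewrite fsum_app in Hsub |- *. simpl. lra.
Qed.

Lemma fsum_support u E l : NoDup l ->
  (forall x, ~ In x E -> u x = C0) -> fsum_sq u l <= fsum_sq u E.
Proof.
  intros Hl H.
  set (onE := fun x => if excluded_middle_informative (In x E) then true else false).
  assert (Hfilter : fsum_sq u l = fsum_sq u (filter onE l)).
  { clear Hl. induction l as [|x l IH]; simpl; auto. rewrite IH.
    unfold onE; destruct excluded_middle_informative as [Hx|Hx]; simpl; auto.
    rewrite (H x Hx), Cnorm2_C0; lra. }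
  rewrite Hfilter. apply fsum_incl; [apply NoDup_filter; auto|].
  intros x Hx. apply filter_In in Hx as [_ Hx].
  unfold onE in Hx; destruct excluded_middle_informative; [auto|discriminate].
Qed.

Lemma normsq_finite_support u G c :
  (forall x, ~ In x G -> u x = C0) -> (forall x, In x G -> Cnorm2 (u x) <= c) ->
  normsq_le u (INR (length G) * c).
Proof.
  intros Hz Hb l Hl. eapply Rle_trans; [apply (fsum_support u G); auto|].
  apply fsum_bound; auto.
Qed.

Lemma normsq_nonneg u M : normsq_le u M -> 0 <= M.
Proof. intros H. apply (H nil (NoDup_nil _)). Qed.

Lemma normsq_point u M : normsq_le u M -> forall x, Cnorm2 (u x) <= M.
Proof.
  intros H x. pose proof (H (x :: nil) (NoDup_cons x (@in_nil _ x) (NoDup_nil _))).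
  simpl in *. lra.
Qed.

Lemma normsq_mono u v M :
  (forall x, Cnorm2 (u x) <= Cnorm2 (v x)) -> normsq_le v M -> normsq_le u M.
Proof. intros H Hv l Hl. eapply Rle_trans; [apply fsum_mono; intros; apply H|]. auto. Qed.

Lemma l2_tail u : in_l2 u -> forall eta, 0 < eta ->
  exists E, NoDup E /\
    forall l, NoDup l -> (forall x, In x l -> ~ In x E) -> fsum_sq u l <= eta.
Proof.
  intros [M HM] eta Heta.
  set (P := fun r => exists l, NoDup l /\ r = fsum_sq u l).
  assert (Hb : bound P) by (exists M; intros r [l [Hl ->]]; apply HM; auto).
  assert (Hne : exists r, P r) by (exists 0, nil; split; [constructor|reflexivity]).
  destruct (completeness P Hb Hne) as [s [Hub Hlub]].
  assert (exists l0, NoDup l0 /\ s - eta < fsum_sq u l0) as [l0 [Hl0 Hs]].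
  { apply NNPP; intro Hn. assert (s <= s - eta); [|lra].
    apply Hlub. intros r [l [Hl ->]]. apply Rnot_lt_le. intro Hlt. apply Hn. exists l; auto. }
  exists l0; split; auto. intros l Hl Hdis.
  assert (Hnd : NoDup (l0 ++ l)) by (apply NoDup_app; auto; intros a Ha Ha'; apply (Hdis a Ha' Ha)).
  assert (fsum_sq u (l0 ++ l) <= s) by (apply Hub; exists (l0 ++ l); auto).
  rewrite fsum_app in H. lra.
Qed.

End FiniteSums.

(** * Coordinate projections onto a finite set and its complement *)

Definition Pon {A} (F : list A) (v : A -> C) : A -> C :=
  fun x => if excluded_middle_informative (In x F) then v x else C0.
Definition Poff {A} (F : list A) (v : A -> C) : A -> C :=
  fun x => if excluded_middle_informative (In x F) then C0 else v x.

Lemma Pon_le {A} F (v : A -> C) x : Cnorm2 (Pon F v x) <= Cnorm2 (v x).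
Proof.
  unfold Pon; destruct excluded_middle_informative; [lra|].
  rewrite Cnorm2_C0; apply Cnorm2_nonneg.
Qed.

Lemma Poff_le {A} F (v : A -> C) x : Cnorm2 (Poff F v x) <= Cnorm2 (v x).
Proof.
  unfold Poff; destruct excluded_middle_informative; [|lra].
  rewrite Cnorm2_C0; apply Cnorm2_nonneg.
Qed.

Lemma Pon_l2 {A} F (v : A -> C) : in_l2 v -> in_l2 (Pon F v).
Proof. intros [M H]; exists M; eapply normsq_mono; [apply Pon_le|]; eauto. Qed.

Lemma Poff_l2 {A} F (v : A -> C) : in_l2 v -> in_l2 (Poff F v).
Proof. intros [M H]; exists M; eapply normsq_mono; [apply Poff_le|]; eauto. Qed.

Lemma Pon_outside {A} F (v : A -> C) x : ~ In x F -> Pon F v x = C0.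
Proof. unfold Pon; destruct excluded_middle_informative; tauto. Qed.

Lemma Poff_inside {A} F (v : A -> C) x : In x F -> Poff F v x = C0.
Proof. unfold Poff; destruct excluded_middle_informative; tauto. Qed.

Lemma Pon_inside {A} F (v : A -> C) x : In x F -> Pon F v x = v x.
Proof. unfold Pon; destruct excluded_middle_informative; tauto. Qed.

Lemma Poff_outside {A} F (v : A -> C) x : ~ In x F -> Poff F v x = v x.
Proof. unfold Poff; destruct excluded_middle_informative; tauto. Qed.

Lemma Pon_linear {A} F a (u v : A -> C) :
  Pon F (fun x => Cplus (Cmult a (u x)) (v x)) =
  (fun x => Cplus (Cmult a (Pon F u x)) (Pon F v x)).
Proof.
  apply functional_extensionality; intros x; unfold Pon.
  destruct excluded_middle_informative; auto. destruct a; ceq.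
Qed.

Lemma fsum_Poff {A} (F : list A) (u : A -> C) l eta :
  (forall l', NoDup l' -> (forall x, In x l' -> ~ In x F) -> fsum_sq u l' <= eta) ->
  NoDup l -> fsum_sq (Poff F u) l <= eta.
Proof.
  intros Hu Hl.
  set (offF := fun x => if excluded_middle_informative (In x F) then false else true).
  assert (Hfilter : fsum_sq (Poff F u) l = fsum_sq u (filter offF l)).
  { clear Hl. induction l as [|x l IH]; simpl; auto. rewrite IH. unfold Poff, offF.
    destruct excluded_middle_informative; simpl; auto. rewrite Cnorm2_C0; ring. }
  rewrite Hfilter. apply Hu; [apply NoDup_filter; auto|].
  intros x Hx. apply filter_In in Hx as [_ Hx].
  unfold offF in Hx; destruct excluded_middle_informative; [discriminate|auto].
Qed.

Definition zerov {X} : X -> C := fun _ => C0.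

Lemma in_l2_zero {X} : in_l2 (@zerov X).
Proof. exists 0. intros l _. rewrite fsum_zero; [lra|]. intros; apply Cnorm2_C0. Qed.

Lemma finite_support_l2 {X} (u : X -> C) E : (forall x, ~ In x E -> u x = C0) -> in_l2 u.
Proof. intros H. exists (fsum_sq u E). intros l Hl. apply fsum_support; auto. Qed.

Lemma delta_outside {X} (x x' : X) : x' <> x -> delta x x' = C0.
Proof. unfold delta; destruct excluded_middle_informative; tauto. Qed.

Lemma delta_self {X} (x : X) : delta x x = C1.
Proof. unfold delta; destruct excluded_middle_informative; tauto. Qed.

Lemma delta_norm {X} (x : X) : normsq_le (delta x) 1.
Proof.
  replace 1 with (INR (length (x :: nil)) * 1) by (simpl; ring).
  apply normsq_finite_support.
  - intros x' Hx'. apply delta_outside. intros ->. apply Hx'; left; auto.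
  - intros x' [<-|[]]. rewrite delta_self. unfold Cnorm2, C1; simpl; lra.
Qed.

Definition csum {A} (l : list A) (f : A -> C) : C :=
  fold_right (fun x acc => Cplus (f x) acc) C0 l.

Lemma csum_ext {A} (l : list A) f g : (forall x, In x l -> f x = g x) -> csum l f = csum l g.
Proof.
  induction l; intros H; simpl; auto. rewrite H by (left; auto).
  rewrite IHl; auto. intros; apply H; right; auto.
Qed.

Section LinearOps.
Context {X Y : Type} (T : Op X Y) (Hlin : linear_op T).

Lemma op_zero u : (forall x, u x = C0) -> forall y, T u y = C0.
Proof.
  intros Hu y. replace u with (@zerov X) by (apply functional_extensionality; intros; rewrite Hu; auto).
  pose proof (Hlin C1 zerov zerov in_l2_zero in_l2_zero y) as H.
  replace (fun x => Cplus (Cmult C1 (zerov x)) (zerov x)) with (@zerov X) in H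
    by (apply functional_extensionality; intros x; unfold zerov; ceq).
  destruct (T zerov y) as [a b]. unfold Cplus, Cmult, C1, C0 in *; simpl in *.
  injection H; intros; f_equal; lra.
Qed.

Lemma op_add u v : in_l2 u -> in_l2 v ->
  forall y, T (fun x => Cplus (u x) (v x)) y = Cplus (T u y) (T v y).
Proof.
  intros Hu Hv y. pose proof (Hlin C1 u v Hu Hv y) as H.
  replace (fun x => Cplus (Cmult C1 (u x)) (v x)) with (fun x => Cplus (u x) (v x)) in H
    by (apply functional_extensionality; intros x; destruct (u x), (v x); ceq).
  rewrite H. destruct (T u y), (T v y); ceq.
Qed.

Lemma op_scale a u : in_l2 u -> forall y, T (fun x => Cmult a (u x)) y = Cmult a (T u y).
Proof.
  intros Hu y. pose proof (Hlin a u zerov Hu in_l2_zero y) as H.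
  replace (fun x => Cplus (Cmult a (u x)) (zerov x)) with (fun x => Cmult a (u x)) in H
    by (apply functional_extensionality; intros x; unfold zerov; destruct a, (u x); ceq).
  rewrite H, (op_zero zerov) by (intros; reflexivity). destruct a, (T u y); ceq.
Qed.

Lemma op_split F v : in_l2 v -> forall y, T v y = Cplus (T (Pon F v) y) (T (Poff F v) y).
Proof.
  intros Hv y. rewrite <- op_add by (auto using Pon_l2, Poff_l2).
  f_equal. apply functional_extensionality; intros x. unfold Pon, Poff.
  destruct excluded_middle_informative; destruct (v x); ceq.
Qed.

Lemma op_finite_expansion y l : NoDup l -> forall u, (forall x, ~ In x l -> u x = C0) ->
  T u y = csum l (fun x => Cmult (u x) (coef T y x)).
Proof.
  induction 1 as [|a l Ha Hnd IH]; intros u Hu.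
  - apply op_zero. intros x; apply Hu; auto.
  - set (u' := fun x => if excluded_middle_informative (x = a) then C0 else u x).
    assert (Hu'z : forall x, ~ In x l -> u' x = C0).
    { intros x Hx. unfold u'. destruct excluded_middle_informative; auto.
      apply Hu. intros [H|H]; auto. }
    assert (Hdl : in_l2 (delta a)) by (exists 1; apply delta_norm).
    pose proof (Hlin (u a) (delta a) u' Hdl (finite_support_l2 u' l Hu'z) y) as H.
    replace (fun x => Cplus (Cmult (u a) (delta a x)) (u' x)) with u in H.
    2:{ apply functional_extensionality; intros x. unfold u', delta.
        destruct excluded_middle_informative as [Hxa|Hxa].
        - rewrite Hxa. destruct (u a); ceq.
        - destruct (u x); ceq. }
    rewrite H, (IH u' Hu'z). simpl. f_equal.
    apply csum_ext. intros x Hx. unfold u'. destruct excluded_middle_informative; auto.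
    subst; contradiction.
Qed.

End LinearOps.

Lemma op_minus_linear {X Y} (T S : Op X Y) :
  linear_op T -> linear_op S -> linear_op (op_minus T S).
Proof.
  intros HT HS a u v Hu Hv y. unfold op_minus. rewrite HT, HS by auto.
  destruct a, (T u y), (T v y), (S u y), (S v y); ceq.
Qed.

Lemma opnorm_from_unit {X Y} (T : Op X Y) eps : linear_op T ->
  (forall v, normsq_le v 1 -> normsq_le (T v) (eps * eps)) -> opnorm_le T eps.
Proof.
  intros Hlin Hu v M Hv.
  destruct (Rle_lt_or_eq_dec 0 M (normsq_nonneg v M Hv)) as [HMp|<-].
  - set (c := / sqrt M).
    assert (Hsp : 0 < sqrt M) by (apply sqrt_lt_R0; lra).
    assert (Hcc : c * c * M = 1).
    { unfold c; rewrite <- (sqrt_sqrt M) at 3 by lra; field; lra. }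
    assert (Hcv : normsq_le (fun x => Cmult (c, 0) (v x)) 1).
    { intros l Hl. rewrite fsum_scale, <- Hcc. specialize (Hv l Hl).
      assert (0 <= c * c) by nra. nra. }
    intros l Hl. specialize (Hu _ Hcv l Hl).
    rewrite (fsum_ext _ (fun y => Cmult (c, 0) (T v y))) in Hu
      by (intros y _; rewrite op_scale; auto; exists M; auto).
    rewrite fsum_scale in Hu.
    pose proof (fsum_nonneg (T v) l). nra.
  - intros l Hl. rewrite fsum_zero; [lra|]. intros y.
    rewrite (op_zero T Hlin v), Cnorm2_C0; auto.
    intros x. apply Cnorm2_eq0. pose proof (normsq_point v 0 Hv x); pose proof (Cnorm2_nonneg (v x)); lra.
Qed.

Lemma finite_propagation_in_Md {X Y} (d : (X + Y) -> (X + Y) -> R) (S : Op X Y) :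
  bounded_op S -> (exists L, propagation_lt d S L) -> in_Md d S.
Proof.
  intros HS Hprop. split; auto. intros eps Heps. exists S. split; [auto|split; [auto|]].
  intros v M Hv l Hl. pose proof (normsq_nonneg v M Hv).
  rewrite fsum_zero; [nra|]. intros y. unfold op_minus. destruct (S v y); unfold Cnorm2, Cminus; simpl; ring.
Qed.

(** * Rows of a bounded operator are in l^2 *)

(* Expansion of the nonnegative quadratic form Σ |c u_x - q conj(b_x)|^2,
   with q = q1 + i q2; it drives the proof of Cauchy–Schwarz. *)
Lemma quadratic_form_expansion {A} (l : list A) (u b : A -> C) c q1 q2 :
  fold_right (fun x acc =>
     (c * fst (u x) - q1 * fst (b x) - q2 * snd (b x))^2 +
     (c * snd (u x) - q2 * fst (b x) + q1 * snd (b x))^2 + acc) 0 l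
  = c^2 * fsum_sq u l - 2*c*(q1 * fst (csum l (fun x => Cmult (u x) (b x)))
                            + q2 * snd (csum l (fun x => Cmult (u x) (b x))))
    + (q1^2 + q2^2) * fsum_sq b l.
Proof.
  induction l as [|a l IHl]; [simpl; ring|]. unfold csum in *. cbn [fold_right] in *.
  rewrite IHl. unfold fsum_sq, Cnorm2, Cplus, Cmult. cbn [fold_right fst snd]. ring.
Qed.

Lemma cauchy_schwarz {A} (l : list A) (u b : A -> C) :
  Cnorm2 (csum l (fun x => Cmult (u x) (b x))) <= fsum_sq u l * fsum_sq b l.
Proof.
  set (P1 := fst (csum l (fun x => Cmult (u x) (b x)))).
  set (P2 := snd (csum l (fun x => Cmult (u x) (b x)))).
  assert (Hq : forall c q1 q2,
    0 <= c^2 * fsum_sq u l - 2*c*(q1 * P1 + q2 * P2) + (q1^2 + q2^2) * fsum_sq b l).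
  { intros c q1 q2. unfold P1, P2. rewrite <- quadratic_form_expansion.
    clear. induction l; cbn [fold_right]; [lra|].
    pose proof (pow2_ge_0 (c * fst (u a) - q1 * fst (b a) - q2 * snd (b a))).
    pose proof (pow2_ge_0 (c * snd (u a) - q2 * fst (b a) + q1 * snd (b a))). lra. }
  change (Cnorm2 (csum l (fun x => Cmult (u x) (b x)))) with (P1*P1 + P2*P2).
  set (Au := fsum_sq u l) in *. set (B := fsum_sq b l) in *.
  assert (HA : 0 <= Au) by apply fsum_nonneg.
  assert (HB : 0 <= B) by apply fsum_nonneg.
  assert (HP : 0 <= P1*P1 + P2*P2) by nra.
  destruct (Rle_lt_or_eq_dec 0 B HB) as [HBp|HB0].
  - (* take c = B and q = Σ u_x b_x *)
    specialize (Hq B P1 P2).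
    assert (Au * B - (P1*P1+P2*P2) >= 0).
    { destruct (Rle_or_lt 0 (Au * B - (P1*P1+P2*P2))); [lra|]. nra. }
    lra.
  - (* B = 0 forces the inner product to vanish *)
    rewrite <- HB0 in *.
    destruct (Rle_lt_or_eq_dec 0 (P1*P1+P2*P2) HP) as [Hp|Hp]; [|lra].
    set (k := (Au+1)/(2*(P1*P1+P2*P2))).
    specialize (Hq 1 (k*P1) (k*P2)).
    assert (2*k*(P1*P1+P2*P2) = Au + 1) by (unfold k; field; lra).
    nra.
Qed.

Definition Cconj (z : C) : C := (fst z, - snd z).

Lemma csum_conj {A} (l : list A) (a : A -> C) :
  csum l (fun x => Cmult (Cconj (a x)) (a x)) = (fsum_sq a l, 0).
Proof.
  induction l as [|x l IH]; [reflexivity|].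
  change (fsum_sq a (x :: l)) with (Cnorm2 (a x) + fsum_sq a l).
  unfold csum in *. cbn [fold_right] in *. rewrite IH. destruct (a x); unfold Cplus, Cmult, Cconj, Cnorm2; simpl; f_equal; ring.
Qed.

(* Testing T on the conjugated truncated row gives ||row_y restricted to l||^2 <= K^2. *)
Lemma bounded_row_l2 {X Y} (T : Op X Y) K : linear_op T -> opnorm_le T K ->
  forall y, normsq_le (fun x => coef T y x) (K * K).
Proof.
  intros Hlin Hop y l Hl.
  set (a := fun x => coef T y x). set (s := fsum_sq a l).
  set (vl := Pon l (fun x => Cconj (a x))).
  assert (Hz : forall x, ~ In x l -> vl x = C0) by (intros; apply Pon_outside; auto).
  assert (HT : T vl y = (s, 0)).
  { rewrite (op_finite_expansion T Hlin y l Hl vl Hz). unfold s.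
    rewrite <- (csum_conj l a). apply csum_ext.
    intros x Hx. unfold vl. rewrite Pon_inside; auto. }
  assert (Hn : normsq_le vl s).
  { intros l' Hl'. eapply Rle_trans; [apply (fsum_support vl l l' Hl' Hz)|].
    right. apply fsum_ext. intros x Hx. unfold vl. rewrite Pon_inside by auto.
    unfold Cconj, Cnorm2; simpl; ring. }
  pose proof (normsq_point _ _ (Hop vl s Hn) y) as H. rewrite HT in H.
  unfold Cnorm2 in H; simpl in H.
  assert (Hs : 0 <= s) by apply fsum_nonneg.
  destruct (Rle_lt_or_eq_dec 0 s Hs) as [Hsp|Hs0]; [|fold s; rewrite <- Hs0; nra].
  fold s. apply Rmult_le_reg_r with s; [auto|]. lra.
Qed.

(* For a fixed y, |(T u)(y)|^2 is uniformly small over unit vectors u vanishing on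
   a suitable finite F: split u along a finite set E carrying almost all of u,
   and apply Cauchy–Schwarz against the row tail on E. *)
Lemma bounded_row_tail {X Y} (T : Op X Y) : bounded_op T -> forall y dl, 0 < dl ->
  exists F : list X, forall u, normsq_le u 1 -> (forall x, In x F -> u x = C0) ->
    Cnorm2 (T u y) <= dl.
Proof.
  intros [Hlin [K [HK Hop]]] y dl Hdl.
  set (a := fun x => coef T y x).
  destruct (l2_tail a (ex_intro _ _ (bounded_row_l2 T K Hlin Hop y)) (dl/4))
    as [F [_ HF]]; [lra|].
  exists F. intros u Hu Hz.
  set (eta := dl / (4 * (K*K+1))).
  assert (Heta : 0 < eta) by (unfold eta; apply Rdiv_lt_0_compat; nra).
  assert (HKeta : K*K*eta <= dl/4).
  { assert (eta * (4*(K*K+1)) = dl) by (unfold eta; field; nra). nra. }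
  assert (Hul : in_l2 u) by (exists 1; auto).
  destruct (l2_tail u Hul eta Heta) as [E [HE HEt]].
  rewrite (op_split T Hlin E u Hul y).
  assert (Hfar : Cnorm2 (T (Poff E u) y) <= K*K*eta).
  { apply (normsq_point _ _ (Hop _ _ (fun l Hl => fsum_Poff E u l eta HEt Hl))). }
  assert (Hnear : Cnorm2 (T (Pon E u) y) <= dl/4).
  { rewrite (op_finite_expansion T Hlin y E HE) by (intros; apply Pon_outside; auto).
    rewrite (csum_ext E _ (fun x => Cmult (u x) (Poff F a x))).
    2:{ intros x Hx. rewrite Pon_inside by auto.
        destruct (classic (In x F)); [|rewrite Poff_outside; auto].
        rewrite Poff_inside, Hz by auto. destruct (a x); ceq. }
    eapply Rle_trans; [apply cauchy_schwarz|].
    assert (fsum_sq u E <= 1) by (apply Hu; auto).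
    assert (fsum_sq (Poff F a) E <= dl/4) by (apply fsum_Poff; auto).
    pose proof (fsum_nonneg u E). pose proof (fsum_nonneg (Poff F a) E). nra. }
  eapply Rle_trans; [apply Cnorm2_add_le|]. lra.
Qed.

(** * Compact operators are uniformly small off a finite subset of Y *)

Lemma fsum_close {A} (a b w : A -> C) l delta :
  fsum_sq (fun y => Cminus (a y) (w y)) l <= delta ->
  fsum_sq (fun y => Cminus (b y) (w y)) l <= delta ->
  fsum_sq (fun y => Cminus (a y) (b y)) l <= 4 * delta.
Proof.
  intros Ha Hb. eapply Rle_trans.
  - apply (fsum_le_combination _ (fun y => Cminus (a y) (w y)) (fun y => Cminus (b y) (w y))).
    intros; apply Cnorm2_sub_le.
  - lra.
Qed.

(* If no finite G works, build unit vectors v_n and increasing finite sets G_n with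
   T v_n essentially supported in G_{n+1} but T v_{n+1} large off G_{n+1}; no
   subsequence of (T v_n) can then converge. *)
Lemma compact_uniform_tail {X Y} (T : Op X Y) : compact_op T -> forall e, 0 < e ->
  exists G : list Y, forall v, normsq_le v 1 -> normsq_le (Poff G (T v)) e.
Proof.
  intros [[Hlin [K [HK Hop]]] Hc] e He.
  apply NNPP; intro Hn.
  assert (Hbad : forall G : list Y, exists v, normsq_le v 1 /\ ~ normsq_le (Poff G (T v)) e).
  { intros G. apply NNPP; intro H1. apply Hn. exists G. intros v Hv.
    apply NNPP; intro H2. apply H1. exists v; auto. }
  destruct (choice _ Hbad) as [vf Hvf].
  assert (Htail : forall w : Y -> C, exists E : list Y, in_l2 w -> forall l, NoDup l ->
            (forall y, In y l -> ~ In y E) -> fsum_sq w l <= e/8).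
  { intros w. destruct (classic (in_l2 w)) as [Hw|Hw].
    - destruct (l2_tail w Hw (e/8)) as [E [_ HE]]; [lra|]. exists E; auto.
    - exists nil; tauto. }
  destruct (choice _ Htail) as [Ef HEf].
  set (Gseq := fun n => nat_rect (fun _ => list Y) nil (fun _ G => G ++ Ef (T (vf G))) n).
  assert (HGS : forall n, Gseq (S n) = Gseq n ++ Ef (T (vf (Gseq n)))) by reflexivity.
  assert (Hmono : forall n m, (n <= m)%nat -> incl (Gseq n) (Gseq m)).
  { intros n m Hnm. induction Hnm; [apply incl_refl|].
    rewrite HGS. intros x Hx. apply in_or_app; left; auto. }
  destruct (Hc (fun n => vf (Gseq n)) 1 (fun n => proj1 (Hvf _))) as [phi [Hphi [w [Hw Hconv]]]].
  destruct (Hconv (e/32)) as [N HN]; [lra|].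
  set (a := T (vf (Gseq (phi (S N))))).
  set (b := T (vf (Gseq (phi N)))).
  apply (proj2 (Hvf (Gseq (phi (S N))))). fold a.
  intros l0 Hl0. apply fsum_Poff; auto. intros l Hl Hoff.
  assert (Hb : fsum_sq b l <= e/8).
  { apply HEf; auto.
    - exists (K*K*1). apply Hop, Hvf.
    - intros y Hy Hy2. apply (Hoff y Hy). apply (Hmono (S (phi N))); [apply Hphi|].
      rewrite HGS. apply in_or_app; right; auto. }
  assert (Hab : fsum_sq (fun y => Cminus (a y) (b y)) l <= 4 * (e/32))
    by (apply fsum_close with (w := w); [apply (HN (S N))|apply (HN N)]; auto).
  assert (fsum_sq a l <= 2 * fsum_sq (fun y => Cminus (a y) (b y)) l + 2 * fsum_sq b l)
    by (apply fsum_le_combination; intros; apply Cnorm2_le_diff).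
  lra.
Qed.

(** * Truncations P_G T P_F *)

Definition truncate {X Y} (F : list X) (G : list Y) (T : Op X Y) : Op X Y :=
  fun v => Pon G (T (Pon F v)).

Lemma truncate_bounded {X Y} F G (T : Op X Y) : bounded_op T -> bounded_op (truncate F G T).
Proof.
  intros [Hlin [K [HK Hop]]]. split.
  - intros a u v Hu Hv y. unfold truncate. rewrite Pon_linear.
    assert (Hu' := Pon_l2 F u Hu). assert (Hv' := Pon_l2 F v Hv).
    set (u' := Pon F u) in *. set (v' := Pon F v) in *. unfold Pon.
    destruct excluded_middle_informative; [apply Hlin; auto|destruct a; ceq].
  - exists K. split; auto. intros v M Hv.
    eapply normsq_mono; [apply Pon_le|]. apply Hop. eapply normsq_mono; [apply Pon_le|]. auto.
Qed.

Lemma truncate_coef {X Y} F G (T : Op X Y) : linear_op T ->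
  forall x y, coef (truncate F G T) y x <> C0 -> In x F /\ In y G.
Proof.
  intros Hlin x y Hne. unfold coef, truncate in Hne. split.
  - apply NNPP; intro HxF. apply Hne. destruct (classic (In y G)).
    + rewrite Pon_inside by auto. apply (op_zero T Hlin). intros x'.
      destruct (classic (In x' F)); [|apply Pon_outside; auto].
      rewrite Pon_inside by auto. apply delta_outside. intros ->; tauto.
    + apply Pon_outside; auto.
  - apply NNPP; intro HyG. apply Hne, Pon_outside; auto.
Qed.

Lemma finite_upper_bound {A} (l : list A) (g : A -> R) : exists M, forall a, In a l -> g a <= M.
Proof.
  induction l as [|a l [M HM]]; [exists 0; intros _ []|].
  exists (Rmax (g a) M). intros b [<-|Hb]; [apply Rmax_l|].
  eapply Rle_trans; [apply HM; auto|apply Rmax_r].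
Qed.

Lemma finite_matrix_propagation {X Y} (d : (X + Y) -> (X + Y) -> R) (S : Op X Y) F G :
  (forall x y, coef S y x <> C0 -> In x F /\ In y G) -> exists L, propagation_lt d S L.
Proof.
  intros Hsupp.
  destruct (finite_upper_bound (list_prod F G) (fun p => d (inl (fst p)) (inr (snd p))))
    as [M HM].
  exists (M + 1). intros x y HL. apply NNPP; intro Hne.
  pose proof (HM (x, y) (proj2 (in_prod_iff F G x y) (Hsupp x y Hne))). simpl in *. lra.
Qed.

Lemma truncate_remainder {X Y} F G (T : Op X Y) v : linear_op T -> in_l2 v ->
  forall y, Cnorm2 (op_minus T (truncate F G T) v y) =
            Cnorm2 (Poff G (T v) y) + Cnorm2 (Pon G (T (Poff F v)) y).
Proof.
  intros Hlin Hv y. unfold op_minus, truncate.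
  destruct (classic (In y G)) as [Hy|Hy].
  - rewrite Poff_inside, !Pon_inside, (op_split T Hlin F v Hv y) by auto.
    destruct (T (Pon F v) y), (T (Poff F v) y); unfold Cnorm2, Cminus, Cplus, C0; simpl; ring.
  - rewrite !Pon_outside, Poff_outside by auto.
    destruct (T v y); unfold Cnorm2, Cminus, C0; simpl; ring.
Qed.

Theorem compact_in_Md {X Y} (d : (X + Y) -> (X + Y) -> R) (T : Op X Y) :
  compact_op T -> in_Md d T.
Proof.
  intros Hc. pose proof Hc as [HTb _]. pose proof HTb as [Hlin _].
  split; auto. intros eps Heps.
  destruct (compact_uniform_tail T Hc (eps*eps/2)) as [G HG]; [nra|].
  set (n := INR (length G)).
  assert (Hn : 0 <= n) by apply pos_INR.
  set (dl := eps*eps / (2 * (n + 1))).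
  assert (Hdl : 0 < dl) by (unfold dl; apply Rdiv_lt_0_compat; nra).
  assert (Hndl : n * dl <= eps*eps/2).
  { assert (dl * (2 * (n + 1)) = eps*eps) by (unfold dl; field; lra). nra. }
  destruct (choice _ (fun y => bounded_row_tail T HTb y dl Hdl)) as [Fy HFy].
  set (F := flat_map Fy G).
  exists (truncate F G T). split; [|split].
  - apply truncate_bounded; auto.
  - apply (finite_matrix_propagation d _ F G), truncate_coef; auto.
  - apply opnorm_from_unit; [apply op_minus_linear; auto; apply truncate_bounded; auto|].
    intros v Hv l Hl.
    assert (Hvl : in_l2 v) by (exists 1; auto).
    rewrite (fsum_add _ _ _ l (truncate_remainder F G T v Hlin Hvl)).
    assert (Hfar : fsum_sq (Poff G (T v)) l <= eps*eps/2) by (apply HG; auto).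
    assert (Hnear : fsum_sq (Pon G (T (Poff F v))) l <= n * dl).
    { apply normsq_finite_support; auto; intros y Hy; [apply Pon_outside; auto|].
      rewrite Pon_inside by auto. apply HFy; [eapply normsq_mono; [apply Poff_le|]; eauto|].
      intros x Hx. apply Poff_inside, in_flat_map. exists y; auto. }
    lra.
Qed.

(** * Part 2: operators of finite propagation that are not compact *)

Lemma infinite_injective_seq {A} (P : A -> Prop) :
  (forall l : list A, exists x, P x /\ ~ In x l) ->
  exists xs : nat -> A, (forall n, P (xs n)) /\ forall m n, xs m = xs n -> m = n.
Proof.
  intros Hinf. destruct (choice _ Hinf) as [pick Hpick].
  set (before := fun n => nat_rect (fun _ => list A) nil (fun _ l => pick l :: l) n).
  set (xs := fun n => pick (before n)).
  assert (Hbefore : forall m n, (m < n)%nat -> In (xs m) (before n)).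
  { intros m n Hmn. induction Hmn; simpl; [left; auto|right; auto]. }
  exists xs. split; [intros; apply Hpick|].
  intros m n E. destruct (Nat.lt_total m n) as [Hmn|[Hmn|Hmn]]; auto; exfalso.
  - apply (proj2 (Hpick (before n))). fold (xs n). rewrite <- E. auto.
  - apply (proj2 (Hpick (before m))). fold (xs m). rewrite E. auto.
Qed.

Lemma partial_inverse {A B} (f : A -> B) (P : A -> Prop) : injective f ->
  exists g : B -> option A, forall y x, g y = Some x <-> P x /\ f x = y.
Proof.
  intros Hf. apply (choice (fun y o => forall x, o = Some x <-> P x /\ f x = y)).
  intros y. destruct (classic (exists x, P x /\ f x = y)) as [[x0 [Hx0 E0]]|Hno].
  - exists (Some x0). intros x. split; [intros [=<-]; auto|].
    intros [_ Ex]. f_equal. apply Hf. congruence.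
  - exists None. split; [discriminate|]. intros Hx. exfalso; eauto.
Qed.

Definition pullback_op {X Y} (g : Y -> option X) : Op X Y :=
  fun v y => match g y with Some x => v x | None => C0 end.

Lemma pullback_bounded {X Y} (g : Y -> option X) :
  (forall y y' x, g y = Some x -> g y' = Some x -> y = y') -> bounded_op (pullback_op g).
Proof.
  intros Hg. split.
  - intros a u v _ _ y. unfold pullback_op. destruct (g y); auto. destruct a; ceq.
  - exists 1. split; [lra|]. intros v M Hv l Hl.
    (* the sum over l is a sum of |v|^2 over the distinct points g(l) *)
    set (img := flat_map (fun y => match g y with Some x => x :: nil | None => nil end)).
    assert (Himg : forall l, fsum_sq (pullback_op g v) l = fsum_sq v (img l)).
    { induction l0 as [|y l0 IH]; simpl; auto. rewrite IH. unfold pullback_op.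
      destruct (g y); simpl; auto. rewrite Cnorm2_C0; ring. }
    assert (Hin : forall l x, In x (img l) -> exists y, In y l /\ g y = Some x).
    { intros l0 x Hx. apply in_flat_map in Hx as [y [Hy Hx]].
      exists y; split; auto. destruct (g y); simpl in Hx; [|tauto]. destruct Hx as [->|[]]; auto. }
    assert (Hnd : forall l, NoDup l -> NoDup (img l)).
    { induction 1 as [|y l0 Hy Hnd IH]; simpl; [constructor|].
      destruct (g y) eqn:E; simpl; auto. constructor; auto.
      intros Hx. destruct (Hin l0 x Hx) as [y' [Hy' E']].
      rewrite (Hg y y' x E E') in Hy. contradiction. }
    rewrite Himg. replace (1 * 1 * M) with M by ring. auto.
Qed.

Lemma pullback_coef {X Y} (g : Y -> option X) x y :
  coef (pullback_op g) y x <> C0 -> g y = Some x.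
Proof.
  unfold coef, pullback_op. destruct (g y) as [x'|]; intros Hne; [|tauto].
  destruct (classic (x' = x)) as [->|Hx]; auto. exfalso; apply Hne, delta_outside; auto.
Qed.

Lemma compact_not_onto_basis {X Y} (T : Op X Y) (v : nat -> X -> C) (ys : nat -> Y) :
  compact_op T -> (forall n, normsq_le (v n) 1) ->
  (forall m n, ys m = ys n -> m = n) -> (forall n y, T (v n) y = delta (ys n) y) -> False.
Proof.
  intros [_ Hc] Hv Hys HT.
  destruct (Hc v 1 Hv) as [phi [Hphi [w [_ Hconv]]]].
  destruct (Hconv (1/4)) as [N HN]; [lra|].
  set (m := phi N). set (n := phi (S N)).
  assert (Hmn : ys m <> ys n) by (intros E; apply Hys in E; pose proof (Hphi N); lia).
  set (l := ys m :: ys n :: nil).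
  assert (Hl : NoDup l).
  { constructor; [intros [E|[]]; auto|constructor; [intros []|constructor]]. }
  assert (Hclose : fsum_sq (fun y => Cminus (T (v m) y) (T (v n) y)) l <= 4 * (1/4))
    by (apply fsum_close with (w := w); [apply (HN N)|apply (HN (S N))]; auto).
  unfold l in Hclose. simpl in Hclose. rewrite !HT, !delta_self in Hclose.
  rewrite (delta_outside (ys m) (ys n)), (delta_outside (ys n) (ys m)) in Hclose by auto.
  unfold Cnorm2, Cminus, C0, C1 in Hclose; simpl in Hclose. lra.
Qed.

Theorem Md_compact_finite_near_points {X Y} (d : (X + Y) -> (X + Y) -> R) :
  (forall T : Op X Y, in_Md d T -> compact_op T) ->
  forall L (f : X -> Y), injective f ->
    exists l : list X, forall x, d (inl x) (inr (f x)) <= L -> In x l.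
Proof.
  intros HMd L f Hf. apply NNPP; intro Hfin.
  set (near := fun x => d (inl x) (inr (f x)) <= L).
  assert (Hinf : forall l, exists x, near x /\ ~ In x l).
  { intros l. apply NNPP; intro H1. apply Hfin. exists l. intros x Hx.
    apply NNPP; intro H2. apply H1. exists x; auto. }
  destruct (infinite_injective_seq near Hinf) as [xs [Hnear Hxs]].
  destruct (partial_inverse f near Hf) as [g Hg].
  set (V := pullback_op g).
  assert (HVb : bounded_op V).
  { apply pullback_bounded. intros y y' x E E'.
    apply Hg in E as [_ <-]. apply Hg in E' as [_ <-]. auto. }
  assert (HVprop : propagation_lt d V (L + 1)).
  { intros x y HL. apply NNPP; intro Hne.
    apply pullback_coef in Hne. apply Hg in Hne as [Hx <-]. unfold near in Hx. lra. }
  assert (HVdelta : forall x y, near x -> V (delta x) y = delta (f x) y).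
  { intros x y Hx. unfold V, pullback_op. destruct (g y) as [x'|] eqn:E.
    - apply Hg in E as [_ <-]. destruct (classic (x' = x)) as [->|Hne].
      + rewrite !delta_self; auto.
      + rewrite !delta_outside; auto.
    - rewrite delta_outside; auto. intros ->.
      rewrite (proj2 (Hg (f x) x)) in E by auto. discriminate. }
  apply (compact_not_onto_basis V (fun n => delta (xs n)) (fun n => f (xs n))).
  - apply HMd, finite_propagation_in_Md; eauto.
  - intros; apply delta_norm.
  - intros m n E. apply Hxs, Hf, E.
  - intros n y. apply HVdelta, Hnear.
Qed.

Theorem mainTheorem2 (X Y : Type) (dX : X -> X -> R) (dY : Y -> Y -> R)
  (hX : is_metric dX) (hXc : countable X) (hXd : discrete_metric dX)
  (hY : is_metric dY) (hYc : countable Y) (hYd : discrete_metric dY)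
  (d : (X + Y) -> (X + Y) -> R) (hd : in_D dX dY d) :
  (forall T : Op X Y, compact_op T -> in_Md d T) /\
  ((forall T : Op X Y, compact_op T <-> in_Md d T) ->
   exists L, 0 < L /\
     forall f : X -> Y, injective f ->
       exists l : list X, forall x, d (inl x) (inr (f x)) <= L -> In x l).
Proof.
  split.
  - intros T; apply compact_in_Md.
  - intros Heq. exists 1. split; [lra|].
    apply Md_compact_finite_near_points. intros T; apply Heq.
Qed.
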